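(* Let $\Sigma=I_d$, $\beta_*\in\mathbb{R}^d$, $\sigma^2\ge0$. Define the deterministic equivalents of the min-norm interpolator as follows. If $d<n$: $\mathsf{B}_{\mathsf{R},0}=0$, $\mathsf{V}_{\mathsf{R},0}=\frac{\sigma^2d}{n-d}$, $\mathsf{B}_{\mathsf{N},0}=\|\beta_*\|_2^2$, $\mathsf{V}_{\mathsf{N},0}=\frac{\sigma^2\operatorname{Tr}(\Sigma^{-1})}{n-d}$. If $d>n$, with $\lambda_n>0$ solving $\operatorname{Tr}(\Sigma(\Sigma+\lambda_nI)^{-1})=n$: $\mathsf{B}_{\mathsf{R},0}=\frac{\lambda_n^2\langle\beta_*,\Sigma(\Sigma+\lambda_nI)^{-2}\beta_*\rangle}{1-n^{-1}\operatorname{Tr}(\Sigma^2(\Sigma+\lambda_nI)^{-2})}$, $\mathsf{V}_{\mathsf{R},0}=\frac{\sigma^2\operatorname{Tr}(\Sigma^2(\Sigma+\lambda_nI)^{-2})}{n-\operatorname{Tr}(\Sigma^2(\Sigma+\lambda_nI)^{-2})}$, $\mathsf{B}_{\mathsf{N},0}=\langle\beta_*,\Sigma(\Sigma+\lambda_nI)^{-1}\beta_*\rangle$, $\mathsf{V}_{\mathsf{N},0}=\frac{\sigma^2\operatorname{Tr}(\Sigma(\Sigma+\lambda_nI)^{-2})}{n-\operatorname{Tr}(\Sigma^2(\Sigma+\lambda_nI)^{-2})}$. Let $\mathsf{R}_0=\mathsf{B}_{\mathsf{R},0}+\mathsf{V}_{\mathsf{R},0}$ and $\mathsf{N}_0=\mathsf{B}_{\mathsf{N},0}+\mathsf{V}_{\mathsf{N},0}$.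 Then $$\mathsf{R}_0=\begin{cases}\mathsf{N}_0-\|\beta_*\|_2^2,& d<n,\\ \sqrt{\big[\mathsf{N}_0-(\|\beta_*\|_2^2-\sigma^2)\big]^2+4\|\beta_*\|_2^2\sigma^2}-\sigma^2,& d>n.\end{cases}$$ Moreover, in both regimes $\mathsf{V}_{\mathsf{R},0}=\mathsf{V}_{\mathsf{N},0}$ and $\mathsf{B}_{\mathsf{R},0}+\mathsf{B}_{\mathsf{N},0}=\|\beta_*\|_2^2$.
   Context: These are deterministic equivalents of the bias/variance of the test risk $\mathbb{E}_\varepsilon\|\beta_*-\hat\beta_{\min}\|_\Sigma^2$ and of the squared norm $\mathbb{E}_\varepsilon\|\hat\beta_{\min}\|_2^2$ for the minimum-$\ell_2$-norm interpolator $\hat\beta_{\min}$ in linear regression with $n$ samples, dimension $d$, covariance $\Sigma$, noise variance $\sigma^2$; they are defined directly by the formulas in the claim. *)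

(* R : rcfType (real closed field, needed for Num.sqrt). *)
From HB Require Import structures.
From mathcomp Require Import all_boot all_order all_algebra.
Set Implicit Arguments. Unset Strict Implicit. Unset Printing Implicit Defensive.
Import Order.TTheory GRing.Theory Num.Theory.
Local Open Scope ring_scope.

Section DetEquiv.
Variables (R : rcfType) (d n : nat).
Implicit Types (Sigma : 'M[R]_d) (beta : 'cV[R]_d).

Definition qform (M : 'M[R]_d) beta : R := (beta^T *m M *m beta) 0 0.
Definition sqnorm beta : R := (beta^T *m beta) 0 0.
Definition resolv Sigma lam : 'M[R]_d := invmx (Sigma + lam%:M).

(* Deterministic equivalents of the min-norm interpolator.  The argument
   lam plays the role of lambda_n and is only used in the regime d > n. *)
Definition BR0 Sigma beta (sigma2 lam : R) : R :=
  if (d < n)%N then 0 else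
  lam ^+ 2 * qform (Sigma *m resolv Sigma lam ^+ 2) beta /
  (1 - n%:R^-1 * \tr (Sigma ^+ 2 *m resolv Sigma lam ^+ 2)).

Definition VR0 Sigma beta (sigma2 lam : R) : R :=
  if (d < n)%N then sigma2 * d%:R / (n%:R - d%:R) else
  sigma2 * \tr (Sigma ^+ 2 *m resolv Sigma lam ^+ 2) /
  (n%:R - \tr (Sigma ^+ 2 *m resolv Sigma lam ^+ 2)).

Definition BN0 Sigma beta (sigma2 lam : R) : R :=
  if (d < n)%N then sqnorm beta else
  qform (Sigma *m resolv Sigma lam) beta.

Definition VN0 Sigma beta (sigma2 lam : R) : R :=
  if (d < n)%N then sigma2 * \tr (invmx Sigma) / (n%:R - d%:R) else
  sigma2 * \tr (Sigma *m resolv Sigma lam ^+ 2) /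
  (n%:R - \tr (Sigma ^+ 2 *m resolv Sigma lam ^+ 2)).

Definition R0 Sigma beta (sigma2 lam : R) : R :=
  BR0 Sigma beta sigma2 lam + VR0 Sigma beta sigma2 lam.
Definition N0 Sigma beta (sigma2 lam : R) : R :=
  BN0 Sigma beta sigma2 lam + VN0 Sigma beta sigma2 lam.

End DetEquiv.

From HB Require Import structures.
From mathcomp Require Import all_boot all_order all_algebra.
From mathcomp Require Import ring.
Import Order.TTheory GRing.Theory Num.Theory.
Local Open Scope ring_scope.

(* For [Sigma = I] every resolvent is the scalar [t = 1/(1 + lam)], the
   equation defining [lam] reads [t d = n], and all four deterministic
   equivalents become explicit in [t]: [B_R = (1 - t)|b|^2], [B_N = t|b|^2],
   [V_R = V_N = sigma^2 t/(1 - t)].  The square-root formula is then the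
   observation that the radicand is a perfect square. *)

Lemma scalar_mxXn (R : comPzRingType) d (a : R) k :
  (a%:M : 'M[R]_d) ^+ k = (a ^+ k)%:M.
Proof.
elim: k => [|k IHk]; first by rewrite !expr0.
by rewrite !exprS IHk scalar_mxM.
Qed.

Lemma qform_scalar (R : rcfType) d (a : R) (b : 'cV[R]_d) :
  qform (a%:M) b = a * sqnorm b.
Proof. by rewrite /qform /sqnorm mul_mx_scalar -scalemxAl mxE. Qed.

Lemma sqnorm_ge0 (R : rcfType) d (b : 'cV[R]_d) : 0 <= sqnorm b.
Proof.
rewrite /sqnorm mxE; apply: sumr_ge0 => i _.
by rewrite mxE -expr2 sqr_ge0.
Qed.

Lemma resolv_id (R : rcfType) d (lam : R) :
  resolv (1%:M : 'M[R]_d) lam = ((1 + lam)^-1)%:M.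
Proof. by rewrite /resolv -(rmorphD (@scalar_mx R d)) invmx_scalar. Qed.

(* The radicand equals [((1 - t) B + v + s)^2] because [(v + s)(1 - t) = s]. *)
Lemma sqrt_radicand_square (R : rcfType) (t B s : R) :
  0 < t < 1 -> 0 <= B -> 0 <= s ->
  let v := s * t / (1 - t) in
  (1 - t) * B + v = Num.sqrt ((t * B + v - (B - s)) ^+ 2 + 4 * B * s) - s.
Proof.
move=> /andP[t_gt0 t_lt1] B_ge0 s_ge0 v.
have t1_neq0 : 1 - t != 0 by rewrite subr_eq0 eq_sym lt_eqF.
have v_ge0 : 0 <= v by rewrite /v divr_ge0 ?mulr_ge0 ?subr_ge0 // ltW.
have -> : (t * B + v - (B - s)) ^+ 2 + 4 * B * s = ((1 - t) * B + v + s) ^+ 2.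
  by rewrite /v; field.
rewrite sqrtr_sqr ger0_norm; first by rewrite addrK.
by rewrite !addr_ge0 // mulr_ge0 // subr_ge0 ltW.
Qed.

Section Isotropic.
Variables (R : rcfType) (d n : nat) (beta : 'cV[R]_d) (sigma2 lam : R).
Local Notation I := (1%:M : 'M[R]_d).
Local Notation t := ((1 + lam)^-1).

Lemma VR0_id_eq_VN0 : VR0 n I beta sigma2 lam = VN0 n I beta sigma2 lam.
Proof. by rewrite /VR0 /VN0 invmx1 mxtrace1 scalar_mxXn expr1n. Qed.

Section Underparametrized.
Hypothesis d_lt_n : (d < n)%N.

Lemma BR0_id_underparam : BR0 n I beta sigma2 lam = 0.
Proof. by rewrite /BR0 d_lt_n. Qed.

Lemma BN0_id_underparam : BN0 n I beta sigma2 lam = sqnorm beta.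
Proof. by rewrite /BN0 d_lt_n. Qed.

End Underparametrized.

Section Overparametrized.
Hypotheses (n_lt_d : (n < d)%N) (lam_gt0 : 0 < lam).
Hypothesis lam_eq : \tr (I *m resolv I lam) = n%:R.

Let d_ltn_n : (d < n)%N = false.
Proof. by apply/negbTE; rewrite -leqNgt ltnW. Qed.

Let lam1_neq0 : 1 + lam != 0.
Proof. by rewrite gt_eqF // ltr_wpDr // ltW. Qed.

Lemma resolv_id_bounds : 0 < t < 1.
Proof. by rewrite invr_gt0 invf_lt1 ?ltrDl ltr_wpDr // ltW. Qed.

Lemma trace_resolv_id : t *+ d = n%:R.
Proof. by rewrite -lam_eq resolv_id mul1mx mxtrace_scalar. Qed.

Let n_neq0 : n%:R != 0 :> R.
Proof.
have /andP[t_gt0 _] := resolv_id_bounds.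
rewrite -trace_resolv_id gt_eqF // mulrn_wgt0 //.
exact: leq_ltn_trans n_lt_d.
Qed.

Let trace_resolv_sq : t ^+ 2 *+ d = n%:R * t.
Proof. by rewrite exprS expr1 -mulrnAr trace_resolv_id mulrC. Qed.

Let t1_neq0 : 1 - t != 0.
Proof.
have /andP[_ t_lt1] := resolv_id_bounds.
by rewrite subr_eq0 eq_sym lt_eqF.
Qed.

Lemma BR0_id_overparam : BR0 n I beta sigma2 lam = (1 - t) * sqnorm beta.
Proof.
rewrite /BR0 d_ltn_n resolv_id !scalar_mxXn expr1n !mul1mx qform_scalar.
have lam_t : lam * t = 1 - t by field.
rewrite mxtrace_scalar trace_resolv_sq mulKf // mulrA -exprMn lam_t.
by rewrite mulrAC expr2 mulfK.
Qed.

Lemma BN0_id_overparam : BN0 n I beta sigma2 lam = t * sqnorm beta.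
Proof. by rewrite /BN0 d_ltn_n resolv_id mul1mx qform_scalar. Qed.

Lemma VN0_id_overparam : VN0 n I beta sigma2 lam = sigma2 * t / (1 - t).
Proof.
rewrite /VN0 d_ltn_n resolv_id !scalar_mxXn expr1n !mul1mx mxtrace_scalar.
rewrite trace_resolv_sq; move: t1_neq0; move: t => u u1_neq0.
have -> : n%:R - n%:R * u = n%:R * (1 - u) by ring.
by field; rewrite n_neq0 u1_neq0.
Qed.

End Overparametrized.
End Isotropic.

Theorem corollary6 (R : rcfType) (d n : nat) (beta : 'cV[R]_d) (sigma2 : R) :
  0 <= sigma2 ->
  ((d < n)%N -> forall lam : R,
     let Sigma := (1%:M : 'M[R]_d) in
     [/\ R0 n Sigma beta sigma2 lam = N0 n Sigma beta sigma2 lam - sqnorm beta,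
         VR0 n Sigma beta sigma2 lam = VN0 n Sigma beta sigma2 lam
       & BR0 n Sigma beta sigma2 lam + BN0 n Sigma beta sigma2 lam = sqnorm beta])
  /\
  ((n < d)%N -> forall lam : R,
     let Sigma := (1%:M : 'M[R]_d) in
     0 < lam -> \tr (Sigma *m resolv Sigma lam) = n%:R ->
     [/\ R0 n Sigma beta sigma2 lam =
           Num.sqrt ((N0 n Sigma beta sigma2 lam - (sqnorm beta - sigma2)) ^+ 2
                     + 4 * sqnorm beta * sigma2) - sigma2,
         VR0 n Sigma beta sigma2 lam = VN0 n Sigma beta sigma2 lam
       & BR0 n Sigma beta sigma2 lam + BN0 n Sigma beta sigma2 lam = sqnorm beta]).
Proof.
move=> sigma2_ge0; split=> [d_lt_n lam Sigma | n_lt_d lam Sigma lam_gt0 lam_eq].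
  rewrite /R0 /N0 VR0_id_eq_VN0 BR0_id_underparam // BN0_id_underparam //.
  by split=> //; rewrite add0r; ring.
rewrite /R0 /N0 VR0_id_eq_VN0 BR0_id_overparam // BN0_id_overparam //.
rewrite VN0_id_overparam //; split=> //; last by ring.
apply: sqrt_radicand_square => //; [exact: resolv_id_bounds | exact: sqnorm_ge0].
Qed.
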